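(* Let $(M_q,\widetilde B)$ be a quantum seed and $\mathrm{inv}\subseteq[1,N]\setminus\mathrm{ex}$. For each prime element $p\in\mathbb Z[q^{\pm1/2}]$ and each $k\in\mathrm{ex}$, $$\mathcal T_q(M_q)_\ge\cap\big(p\,\mathcal T_q(\mu_kM_q)_\ge\big)=\big(p\,\mathcal T_q(M_q)_\ge\big)\cap\mathcal T_q(\mu_kM_q)_\ge.$$
   Context: $\mathcal A^{1/2}_q=\mathbb Z[q^{\pm1/2}]$; $e_1,\dots,e_N$ standard basis of $\mathbb Z^N$. For a skew-symmetric integer matrix $\Lambda$, the based quantum torus $\mathcal T_q(\Lambda)$ is the $\mathcal A^{1/2}_q$-algebra with basis $X^f$, $f\in\mathbb Z^N$, and $X^fX^g=q^{\Lambda(f,g)/2}X^{f+g}$. A toric frame of a division algebra $\mathcal F_q$ over $\mathbb Q(q^{1/2})$ is a map $M_q:\mathbb Z^N\to\mathcal F_q$ such that for some (unique) skew-symmetric $\Lambda=:\Lambda_{M_q}\in M_N(\mathbb Z)$ there is an injective $\mathcal A^{1/2}_q$-algebra map $\mathcal T_q(\Lambda)\to\mathcal F_q$, $X^f\mapsto M_q(f)$, with $\mathcal F_q$ the skew field of fractions of its image. Fix $\mathrm{ex}\subseteq[1,N]$; $\widetilde B=(b_{ij})$ is an integer matrix with rows $[1,N]$, columns $\mathrm{ex}$, $k$-th column $b^k$. $(\Lambda,\widetilde B)$ is compatible if there are positive integers $d_j$ with $\sum_kb_{kj}\lambda_{ki}=\delta_{ij}d_j$ for all $i\in[1,N]$,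 $j\in\mathrm{ex}$; a quantum seed is $(M_q,\widetilde B)$ with $(\Lambda_{M_q},\widetilde B)$ compatible. For $k\in\mathrm{ex}$, $\mu_k(M_q)$ is the toric frame with matrix $E^\top\Lambda_{M_q}E$ ($E$: $e_{ij}=\delta_{ij}$ for $j\ne k$, $e_{kk}=-1$, $e_{ik}=\max(0,-b_{ik})$ for $i\ne k$) such that $\mu_k(M_q)(e_j)=M_q(e_j)$ for $j\ne k$ and $\mu_k(M_q)(e_k)=M_q(-e_k+[b^k]_+)+M_q(-e_k-[b^k]_-)$, where $[b]_\pm$ keeps the entries $b_i$ with $\pm b_i\ge0$ and sets the others to $0$. For a toric frame $M'_q$, $\mathcal T_q(M'_q)_\ge$ is the $\mathcal A^{1/2}_q$-subalgebra of $\mathcal F_q$ generated by $M'_q(e_i)$, $i\in[1,N]$, and $M'_q(e_j)^{-1}$, $j\in\mathrm{ex}\sqcup\mathrm{inv}$. *)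

From HB Require Import structures.
From mathcomp Require Import all_boot all_order all_algebra.
Set Implicit Arguments. Unset Strict Implicit. Unset Printing Implicit Defensive.
Import Order.TTheory GRing.Theory Num.Theory.
Local Open Scope ring_scope.

(* Q(q^{1/2}) : the field of rational functions in t = q^{1/2} over Q. *)
Definition Kq : fieldType := {fraction {poly rat}}.
Definition qh : Kq := tofrac ('X : {poly rat}).

(* A^{1/2}_q = Z[q^{+-1/2}], as a subring of Kq *)
Definition inA (a : Kq) : Prop :=
  exists (P : {poly int}) (n : nat), a = tofrac (map_poly intr P) / qh ^+ n.

Definition dvdA (p a : Kq) : Prop := exists c, inA c /\ a = p * c.
Definition primeA (p : Kq) : Prop :=
  [/\ inA p, p != 0, ~ inA p^-1 &
      forall a b, inA a -> inA b -> dvdA p (a * b) -> dvdA p a \/ dvdA p b].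

Definition evec N (i : 'I_N) : 'rV[int]_N := delta_mx 0 i.
Definition bform N (L : 'M[int]_N) (f g : 'rV[int]_N) : int := (f *m L *m g^T) 0 0.

Definition skew N (L : 'M[int]_N) : Prop := L^T = - L.

Definition division_ring (F : unitAlgType Kq) : Prop :=
  forall x : F, x != 0 -> x \is a GRing.unit.

Inductive divgen (F : unitAlgType Kq) N (M : 'rV[int]_N -> F) : F -> Prop :=
| dg_gen f : divgen M (M f)
| dg_scal a : inA a -> divgen M (a *: 1)
| dg_add u v : divgen M u -> divgen M v -> divgen M (u + v)
| dg_opp u : divgen M u -> divgen M (- u)
| dg_mul u v : divgen M u -> divgen M v -> divgen M (u * v)
| dg_inv u : divgen M u -> divgen M u^-1.

(* M is a toric frame with matrix L:  X^f |-> M f extends to an injective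
   A-algebra map T_q(L) -> F (unital, multiplicative w.r.t. the twisted
   product, injective = A-linear independence of the images of the basis),
   and F is the skew field of fractions of its image. *)
Definition toric_frame (F : unitAlgType Kq) N (M : 'rV[int]_N -> F)
  (L : 'M[int]_N) : Prop :=
  [/\ skew L,
      M 0 = 1,
      forall f g, M f * M g = (qh ^ bform L f g) *: M (f + g),
      forall (s : seq 'rV[int]_N) (c : 'rV[int]_N -> Kq),
        uniq s -> (forall f, inA (c f)) ->
        \sum_(f <- s) c f *: M f = 0 -> forall f, f \in s -> c f = 0
    & forall x, divgen M x].

(* compatibility of (Lambda, Btilde); Btilde stored as an N x N matrix of
   which only the columns in ex are used *)
Definition compatible N (ex : {set 'I_N}) (L B : 'M[int]_N) : Prop :=
  exists d : 'I_N -> nat, forall j, j \in ex ->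
    (0 < d j)%N /\
    forall i, \sum_(k < N) B k j * L k i = (i == j)%:R * (d j)%:Z.

Definition bcol N (B : 'M[int]_N) (k : 'I_N) : 'rV[int]_N := \row_i B i k.
Definition posp N (b : 'rV[int]_N) : 'rV[int]_N := \row_i Num.max (b 0 i) 0.
Definition negp N (b : 'rV[int]_N) : 'rV[int]_N := \row_i Num.min (b 0 i) 0.

Definition mu_basis (F : unitAlgType Kq) N (M : 'rV[int]_N -> F)
  (B : 'M[int]_N) (k : 'I_N) (j : 'I_N) : F :=
  if j == k then
    M (- evec k + posp (bcol B k)) + M (- evec k - negp (bcol B k))
  else M (evec j).

(* T_q(M')_>= : A-subalgebra generated by x i (all i) and (x j)^-1, j in S,
   where x i = M'(e_i) and S = ex :|: inv *)
Inductive Tge (F : unitAlgType Kq) N (x : 'I_N -> F) (S : {set 'I_N}) : F -> Prop :=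
| tg_gen i : Tge x S (x i)
| tg_inv j : j \in S -> Tge x S (x j)^-1
| tg_scal a : inA a -> Tge x S (a *: 1)
| tg_add u v : Tge x S u -> Tge x S v -> Tge x S (u + v)
| tg_mul u v : Tge x S u -> Tge x S v -> Tge x S (u * v).

(* Write x = X_k, x' = mu_k(M)(e_k) = M(-e_k + [b^k]_+) + M(-e_k - [b^k]_-), and
   let Y be the A-span of the monomials M f with f_k = 0 and f_i >= 0 off
   ex ∪ inv.  Then T_q(M)_>= is graded by the exponent of X_k, with degree-d
   part Y x^d, while T_q(mu_k M)_>= = Σ_n Y x'^n and x' is homogeneous of degree
   -1.  Multiplying by Q = x^m x'^m (degree 0, m large) makes all powers of x'
   nonnegative, so both inclusions can be checked degree by degree, and each
   reduces to: if c ∈ Y and c x^j x'^j (or c x'^j x^j) lies in p Y, then c ∈ p Y.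
   Now x^j x'^j is a product of conjugates of x x' = q^a M([b]_+) + q^b M(-[b]_-),
   a binomial with unit coefficients and distinct exponents, and multiplying by
   such a binomial reflects divisibility by p: compare coefficients by descending
   induction along the direction b^k. *)

From HB Require Import structures.
From mathcomp Require Import all_boot all_order all_algebra.
From mathcomp Require Import zify ring.
Set Implicit Arguments. Unset Strict Implicit. Unset Printing Implicit Defensive.
Import Order.TTheory GRing.Theory Num.Theory.
Local Open Scope ring_scope.

Lemma qh_neq0 : qh != 0.
Proof. by rewrite tofrac_eq0 polyX_eq0. Qed.

Lemma qhzD (a b : int) : qh ^ (a + b) = qh ^ a * qh ^ b.
Proof. by rewrite expfzDr ?qh_neq0. Qed.

Lemma qhzNK (z : int) : qh ^ z * qh ^ (- z) = 1.
Proof. by rewrite -qhzD subrr expr0z. Qed.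

Lemma inA0 : inA 0.
Proof. by exists 0, 0%N; rewrite rmorph0 mul0r. Qed.

Lemma inA1 : inA 1.
Proof. by exists 1, 0%N; rewrite !rmorph1 expr0 divr1. Qed.

Lemma inAM a b : inA a -> inA b -> inA (a * b).
Proof.
move=> [P [n ->]] [Q [m ->]]; exists (P * Q), (n + m)%N.
by rewrite !rmorphM exprD invfM mulrACA.
Qed.

Lemma inAD a b : inA a -> inA b -> inA (a + b).
Proof.
move=> [P [n ->]] [Q [m ->]]; exists (P * 'X ^+ m + Q * 'X ^+ n), (n + m)%N.
have qhX_neq0 j : qh ^+ j != 0 by rewrite expf_neq0 ?qh_neq0.
by rewrite !rmorphD !rmorphM !rmorphXn /= map_polyX -/qh exprD addf_div ?qhX_neq0.
Qed.

Lemma inAN a : inA a -> inA (- a).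
Proof. by move=> [P [n ->]]; exists (- P), n; rewrite !rmorphN mulNr. Qed.

Lemma inAB a b : inA a -> inA b -> inA (a - b).
Proof. by move=> ha hb; apply/inAD/inAN. Qed.

Lemma inA_qhz (z : int) : inA (qh ^ z).
Proof.
case: z => n; first by exists 'X^n, 0%N; rewrite map_polyXn rmorphXn expr0 divr1.
by exists 1, n.+1; rewrite !rmorph1 div1r.
Qed.

Lemma inA_sum (I : eqType) (r : seq I) (P : pred I) (c : I -> Kq) :
  {in r, forall i, inA (c i)} -> inA (\sum_(i <- r | P i) c i).
Proof.
move=> hc; rewrite big_seq_cond.
by elim/big_rec: _ => [|i a /andP[/hc ci _]]; [apply: inA0|apply: inAD].
Qed.

Lemma dvdA0 p : dvdA p 0.
Proof. by exists 0; split; [apply: inA0|rewrite mulr0]. Qed.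

Lemma big_fibers (R : nmodType) (I J : eqType) (r : seq I) (key : I -> J)
  (ks : seq J) (G : I -> R) : uniq ks -> {subset map key r <= ks} ->
  \sum_(i <- r) G i = \sum_(j <- ks) \sum_(i <- r | key i == j) G i.
Proof.
move=> uks sub; rewrite (exchange_big_dep predT) //= big_seq [RHS]big_seq.
apply: eq_bigr => i ri; rewrite -big_filter.
rewrite (@eq_filter _ _ (pred1 (key i))) => [|j]; last exact: eq_sym.
by rewrite filter_pred1_uniq ?big_seq1 // sub // map_f.
Qed.

Lemma sumD1_seq (R : nmodType) (I : eqType) (r : seq I) (G : I -> R) j :
  uniq r -> (j \notin r -> G j = 0) ->
  \sum_(i <- r) G i = G j + \sum_(i <- r | i != j) G i.
Proof.
move=> ur Gj; have [jr|jr] := boolP (j \in r); first exact: bigD1_seq.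
rewrite Gj // add0r big_seq [RHS]big_seq_cond; apply: eq_bigl => i.
by case: (boolP (i \in r)) => //= ir; apply/esym/eqP => ij; rewrite -ij ir in jr.
Qed.

Lemma seq_int_lbound (s : seq int) : exists m : nat, {in s, forall n, - (m%:Z) <= n}.
Proof.
elim: s => [|n s [m IH]]; first by exists 0%N.
exists (maxn m (absz n)) => i /[!inE] /orP[/eqP->|/IH]; lia.
Qed.

Lemma step_induction (T : eqType) (P : T -> Prop) (s : seq T) (phi : T -> int)
    (step : T -> T) :
  (forall f, f \notin s -> P f) -> (forall f, phi f < phi (step f)) ->
  (forall f, P (step f) -> P f) -> forall f, P f.
Proof.
move=> Pout phiS PS; pose top := \sum_(g <- s) `|phi g|.
have top_ge g : g \in s -> phi g <= top.
  move=> gs; rewrite (le_trans (ler_norm _)) // /top (big_rem g) //=.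
  by rewrite lerDl sumr_ge0.
suff Pn n : forall f, top - phi f < n%:Z -> P f.
  by move=> f; apply: (Pn (absz (top - phi f)).+1); lia.
elim: n => [|n IH] f fn; last by apply/PS/IH; have := phiS f; lia.
by apply: Pout; apply: contraTN fn => /top_ge; lia.
Qed.

Section Bform.
Variables (N : nat) (L : 'M[int]_N).
Local Notation lam := (bform L).

Lemma bformDl f g h : lam (f + g) h = lam f h + lam g h.
Proof. by rewrite /bform !mulmxDl mxE. Qed.

Lemma bformNl f g : lam (- f) g = - lam f g.
Proof. by rewrite /bform !mulNmx mxE. Qed.

Lemma bformNr f g : lam f (- g) = - lam f g.
Proof. by rewrite /bform linearN /= mulmxN mxE. Qed.

Lemma bformZl (z : int) f g : lam (z *: f) g = z * lam f g.
Proof. by rewrite /bform -!scalemxAl mxE. Qed.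

Hypothesis skL : skew L.

Lemma bform_skew f g : lam g f = - lam f g.
Proof.
have tr00 (A : 'M[int]_1) : A 0 0 = A^T 0 0 by rewrite mxE.
rewrite /bform tr00 !trmx_mul trmxK skL mulmxA mulmxN mulNmx.
by rewrite [in LHS]mxE.
Qed.

Lemma bform_alt f : lam f f = 0.
Proof. by have := bform_skew f f; lia. Qed.

End Bform.

Lemma compatible_bform N (ex : {set 'I_N}) (L B : 'M[int]_N) k :
  compatible ex L B -> k \in ex ->
  exists2 d : int, 0 < d & forall f, bform L (bcol B k) f = d * f 0 k.
Proof.
move=> [dd compat] kex; have [dk_gt0 Bk] := compat k kex.
exists (dd k)%:Z => // f; rewrite /bform.
have -> : bcol B k *m L = (dd k)%:Z *: evec k.
  by apply/rowP=> j; rewrite !mxE mulrC -Bk; apply: eq_bigr => i _; rewrite mxE.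
by rewrite -scalemxAl /evec -rowE !mxE.
Qed.

Section TgeClosure.
Variables (F : unitAlgType Kq) (N : nat) (gen : 'I_N -> F) (S : {set 'I_N}).
Local Notation T := (Tge gen S).

Lemma Tge1 : T 1.
Proof. by have := tg_scal gen S inA1; rewrite scale1r. Qed.

Lemma TgeZ a u : inA a -> T u -> T (a *: u).
Proof. by move=> aA Tu; rewrite -[u]mul1r scalerAl; apply/tg_mul/Tu/tg_scal. Qed.

Lemma Tge_sum (I : eqType) (r : seq I) (G : I -> F) :
  {in r, forall i, T (G i)} -> T (\sum_(i <- r) G i).
Proof.
move=> TG; rewrite big_seq; elim/big_rec: _ => [|i z /TG]; last exact: tg_add.
by rewrite -(scale0r 1); apply/tg_scal/inA0.
Qed.

Lemma Tge_exp u n : T u -> T (u ^+ n).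
Proof. by move=> Tu; elim: n => [|n IH]; rewrite ?expr0 ?exprS; [apply: Tge1|apply: tg_mul]. Qed.

Lemma Tge_expz i (z : int) : (0 <= z) || (i \in S) -> T (gen i ^ z).
Proof.
case: z => n iz; first exact/Tge_exp/tg_gen.
by rewrite /exprz -exprVn; apply/Tge_exp/tg_inv; rewrite NegzE oppr_ge0 in iz.
Qed.

End TgeClosure.

(** * A-linear combinations of toric monomials *)

Section ToricFrame.
Variables (F : unitAlgType Kq) (N : nat) (M : 'rV[int]_N -> F) (L : 'M[int]_N).
Hypothesis tfM : toric_frame M L.

Local Notation V := 'rV[int]_N.
Local Notation lam := (bform L).

Lemma M0 : M 0 = 1.
Proof. by case: tfM. Qed.

Lemma M_mul f g : M f * M g = qh ^ lam f g *: M (f + g).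
Proof. by case: tfM. Qed.

Lemma M_free (s : seq V) (c : V -> Kq) : uniq s -> (forall f, inA (c f)) ->
  \sum_(f <- s) c f *: M f = 0 -> forall f, f \in s -> c f = 0.
Proof. by case: tfM => _ _ _ free _; apply: free. Qed.

Let skL : skew L. Proof. by case: tfM. Qed.

Lemma M_add f g : M (f + g) = qh ^ (- lam f g) *: (M f * M g).
Proof. by rewrite M_mul scalerA mulrC qhzNK scale1r. Qed.

Lemma M_mulN f : M f * M (- f) = 1.
Proof. by rewrite M_mul subrr bformNr (bform_alt skL) oppr0 expr0z scale1r M0. Qed.

Lemma M_unit f : M f \is a GRing.unit.
Proof.
by apply/unitrP; exists (M (- f)); rewrite M_mulN -{2}(opprK f) M_mulN.
Qed.

Lemma M_V f : (M f)^-1 = M (- f).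
Proof. by rewrite -[LHS]mulr1 -(M_mulN f) mulKr ?M_unit. Qed.

Lemma M_comm f g : M f * M g = qh ^ (2 * lam f g) *: (M g * M f).
Proof.
rewrite !M_mul scalerA -qhzD addrC (bform_skew skL); congr (qh ^ _ *: _); lia.
Qed.

Lemma M_scale f (z : int) : M (z *: f) = M f ^ z.
Proof.
have Mn (n : nat) : M (n%:Z *: f) = M f ^+ n.
  elim: n => [|n IH]; first by rewrite scale0r M0 expr0.
  rewrite -[n.+1]addn1 PoszD scalerDl scale1r exprD expr1 -IH M_mul bformZl (bform_alt skL).
  by rewrite mulr0 expr0z scale1r.
by case: z => n; rewrite ?NegzE ?scaleNr -?M_V Mn.
Qed.

Definition msum (U : seq (Kq * V)) : F := \sum_(u <- U) u.1 *: M u.2.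
Definition mcoef (U : seq (Kq * V)) (g : V) : Kq := \sum_(u <- U | u.2 == g) u.1.
Definition supported (P : V -> Prop) (U : seq (Kq * V)) :=
  forall u, u \in U -> inA u.1 /\ P u.2.
Definition Aspan (P : V -> Prop) (z : F) := exists2 U, supported P U & z = msum U.

Definition mmul (U W : seq (Kq * V)) :=
  [seq (u.1 * w.1 * qh ^ lam u.2 w.2, u.2 + w.2) | u <- U, w <- W].

Lemma msum_cat U W : msum (U ++ W) = msum U + msum W.
Proof. by rewrite /msum big_cat. Qed.

Lemma msum1 a f : msum [:: (a, f)] = a *: M f.
Proof. by rewrite /msum big_seq1. Qed.

Lemma msum_mul U W : msum U * msum W = msum (mmul U W).
Proof.
rewrite /msum big_allpairs_dep mulr_suml; apply: eq_bigr => u _.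
rewrite mulr_sumr; apply: eq_bigr => w _ /=.
by rewrite -scalerAl -scalerAr M_mul !scalerA mulrAC.
Qed.

Lemma msum_regroup U : msum U = \sum_(g <- undup (map snd U)) mcoef U g *: M g.
Proof.
rewrite /msum (big_fibers (key := snd) _ (undup_uniq (map snd U))) => [|g].
  by apply: eq_bigr => g _; rewrite scaler_suml; apply: eq_bigr => u /eqP ->.
by rewrite mem_undup.
Qed.

Lemma mcoef_out U g : g \notin map snd U -> mcoef U g = 0.
Proof.
move=> gU; rewrite /mcoef big_seq_cond big1 // => u /andP[uU /eqP ug].
by case/negP: gU; rewrite -ug map_f.
Qed.

Lemma mcoef_cat U W g : mcoef (U ++ W) g = mcoef U g + mcoef W g.
Proof. by rewrite /mcoef big_cat. Qed.

Definition mscale a (U : seq (Kq * V)) := [seq (a * u.1, u.2) | u <- U].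

Lemma msum_scale a U : a *: msum U = msum (mscale a U).
Proof. by rewrite /msum big_map scaler_sumr; apply: eq_bigr => u _; rewrite scalerA. Qed.

Lemma mcoef_scale a U g : mcoef (mscale a U) g = a * mcoef U g.
Proof. by rewrite /mcoef big_map mulr_sumr. Qed.

Lemma supportedW (P Q : V -> Prop) U :
  (forall f, P f -> Q f) -> supported P U -> supported Q U.
Proof. by move=> PQ PU u /PU[? /PQ]. Qed.

Lemma supported_scale P a U : inA a -> supported P U -> supported P (mscale a U).
Proof. by move=> aA PU _ /mapP[u /PU[uA Pu] ->]; split=> //; apply: inAM. Qed.

Lemma supported_mmul (P Q R : V -> Prop) U W : (forall f g, P f -> Q g -> R (f + g)) ->
  supported P U -> supported Q W -> supported R (mmul U W).
Proof.
move=> PQR PU QW _ /allpairsP[[s t] [/PU[sA Ps] /QW[tA Qt] ->]] /=.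
by split; [apply/inAM/inA_qhz/inAM|apply: PQR].
Qed.

Lemma msum_eq0 U : supported (fun=> True) U -> msum U = 0 -> forall g, mcoef U g = 0.
Proof.
rewrite msum_regroup => UA U0 g.
have [gU|gU] := boolP (g \in map snd U); last exact: mcoef_out.
apply: (M_free (undup_uniq _) _ U0); last by rewrite mem_undup.
by move=> f; apply: inA_sum => u /UA[].
Qed.

Lemma msum_inj U W : supported (fun=> True) U -> supported (fun=> True) W ->
  msum U = msum W -> forall g, mcoef U g = mcoef W g.
Proof.
move=> UA WA UW g; apply/eqP; rewrite -subr_eq0 -mulN1r -mcoef_scale -mcoef_cat.
apply/eqP/msum_eq0; last by rewrite msum_cat -msum_scale scaleN1r UW subrr.
move=> u; rewrite mem_cat => /orP[/UA //|].
by move/(supported_scale (inAN inA1) WA).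
Qed.

Lemma eq_msum U W : (forall g, mcoef U g = mcoef W g) -> msum U = msum W.
Proof.
move=> UW; apply/eqP; rewrite -subr_eq0 -scaleN1r msum_scale -msum_cat msum_regroup.
by rewrite big1 // => g _; rewrite mcoef_cat mcoef_scale mulN1r UW subrr scale0r.
Qed.

Lemma Aspan0 P : Aspan P 0.
Proof. by exists [::]; rewrite // /msum big_nil. Qed.

Lemma AspanD P u v : Aspan P u -> Aspan P v -> Aspan P (u + v).
Proof.
move=> [U PU ->] [W PW ->]; exists (U ++ W); last by rewrite msum_cat.
by move=> w; rewrite mem_cat => /orP[/PU|/PW].
Qed.

Lemma Aspan_sum P (I : eqType) (r : seq I) (Q : pred I) (G : I -> F) :
  (forall i, i \in r -> Q i -> Aspan P (G i)) -> Aspan P (\sum_(i <- r | Q i) G i).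
Proof.
move=> PG; rewrite big_seq_cond.
by elim/big_rec: _ => [|i z /andP[ir /(PG i ir) Gi]]; [apply: Aspan0|apply: AspanD].
Qed.

Lemma AspanZ P a u : inA a -> Aspan P u -> Aspan P (a *: u).
Proof.
by move=> aA [U PU ->]; exists (mscale a U); [apply: supported_scale|rewrite msum_scale].
Qed.

Lemma AspanW (P Q : V -> Prop) z : (forall f, P f -> Q f) -> Aspan P z -> Aspan Q z.
Proof. by move=> PQ [U PU ->]; exists U => //; apply: supportedW PU. Qed.

Lemma Aspan_M (P : V -> Prop) f : P f -> Aspan P (M f).
Proof.
exists [:: (1, f)]; last by rewrite msum1 scale1r.
by move=> u /[!inE]/eqP-> /=; split=> //; apply: inA1.
Qed.

Lemma AspanM (P Q R : V -> Prop) u v : (forall f g, P f -> Q g -> R (f + g)) ->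
  Aspan P u -> Aspan Q v -> Aspan R (u * v).
Proof.
move=> PQR [U PU ->] [W QW ->]; exists (mmul U W); last exact: msum_mul.
exact: supported_mmul PU QW.
Qed.

Lemma Aspan_unique (P : pred V) a1 a2 b1 b2 :
  Aspan P a1 -> Aspan (fun f => ~~ P f) a2 -> Aspan P b1 -> Aspan (fun f => ~~ P f) b2 ->
  a1 + a2 = b1 + b2 -> a1 = b1.
Proof.
move=> [A1 PA1 ->] [A2 PA2 ->] [B1 PB1 ->] [B2 PB2 ->]; rewrite -!msum_cat.
have free U W : supported P U -> supported (fun f => ~~ P f) W -> supported (fun=> True) (U ++ W).
  by move=> PU PW u; rewrite mem_cat => /orP[/PU[]|/PW[]].
move=> /(msum_inj (free _ _ PA1 PA2) (free _ _ PB1 PB2)) AB.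
have out U g Q : supported Q U -> ~ Q g -> mcoef U g = 0.
  by move=> QU Qg; apply: mcoef_out; apply/mapP=> -[u /QU[_ Qu] ug]; apply: Qg; rewrite ug.
apply: eq_msum => g; have := AB g; rewrite !mcoef_cat.
have [Pg|nPg] := boolP (P g).
  by rewrite (out A2 g _ PA2) ?(out B2 g _ PB2) ?addr0 //= Pg.
by rewrite (out A1 g _ PA1) ?(out B1 g _ PB1) ?add0r //; apply/negP.
Qed.

Lemma mcoef_mul_pair U (a1 a2 : Kq) (g h f : V) :
  mcoef (mmul U [:: (a1, g); (a2, h)]) (f + g) =
  mcoef U f * (a1 * qh ^ lam f g) + mcoef U (f + g - h) * (a2 * qh ^ lam (f + g - h) h).
Proof.
have mcoefM f0 (c : V -> Kq) : \sum_(u <- U | u.2 == f0) u.1 * c u.2 = mcoef U f0 * c f0.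
  by rewrite /mcoef mulr_suml; apply: eq_bigr => u /eqP->.
rewrite /mcoef /mmul big_mkcond big_allpairs_dep /=.
under eq_bigr => u _ do rewrite !big_cons big_nil /= addr0.
rewrite big_split /= -!big_mkcond -(mcoefM f (fun v => a1 * qh ^ lam v g)).
rewrite -(mcoefM (f + g - h) (fun v => a2 * qh ^ lam v h)).
congr (_ + _); apply: eq_big => [u|u _]; rewrite ?mulrA //.
  by rewrite (inj_eq (addIr g)).
by rewrite eq_sym -subr_eq eq_sym.
Qed.

Section Mutation.
Variables (S : {set 'I_N}) (k : 'I_N) (B : 'M[int]_N) (d : int).
Hypotheses (kS : k \in S) (d_gt0 : 0 < d).
Hypothesis bform_b : forall f, lam (bcol B k) f = d * f 0 k.

Local Notation e := (evec k).
Local Notation b := (bcol B k).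
Local Notation bp := (posp (bcol B k)).
Local Notation bm := (- negp (bcol B k)).
Local Notation x := (M (evec k)).
Local Notation x' := (mu_basis M B k k).

(* With S = ex ∪ inv, [inT] is T_q(M)_>= (see [Tge_evecE]) and [inY] is spanned by
   the monomials free of X_k; [homog dg] is the degree-dg part of [inT] for the
   grading by the exponent of X_k. *)
Definition cone (f : V) := forall i, i \notin S -> 0 <= f 0 i.
Definition cone0 (f : V) := f 0 k = 0 /\ cone f.

Local Notation inT := (Aspan cone).
Local Notation inY := (Aspan cone0).
Local Notation homog dg := (Aspan (fun f => cone f /\ f 0 k = dg)).

Lemma evecE (j i : 'I_N) : evec j 0 i = (j == i)%:R.
Proof. by rewrite mxE eqxx eq_sym. Qed.

Lemma cone_evec i : cone (evec i).
Proof. by move=> j _; rewrite evecE ler0n. Qed.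

Lemma coneD f g : cone f -> cone g -> cone (f + g).
Proof. by move=> cf cg i iS; rewrite mxE addr_ge0 ?cf ?cg. Qed.

Lemma cone0D f g : cone0 f -> cone0 g -> cone0 (f + g).
Proof. by move=> [fk cf] [gk cg]; split; [rewrite mxE fk gk addr0|apply: coneD]. Qed.

Lemma cone0_0 : cone0 0.
Proof. by split=> [|i _]; rewrite mxE. Qed.

Lemma inY1 : inY 1.
Proof. by rewrite -M0; apply/Aspan_M/cone0_0. Qed.

Lemma shift_k (z : int) f : (z *: e + f) 0 k = z + f 0 k.
Proof. by rewrite !mxE !eqxx mulr1. Qed.

Lemma cone_shift (z : int) f : cone f -> cone (z *: e + f).
Proof.
move=> cf i iS; rewrite !mxE eqxx /=.
have -> : (i == k) = false by apply: contraNF iS => /eqP ->.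
by rewrite mulr0 add0r cf.
Qed.

Lemma bcol_k : b 0 k = 0.
Proof.
have := bform_b b; rewrite (bform_alt skL) => /esym/eqP.
by rewrite mulf_eq0 gt_eqF //= => /eqP.
Qed.

Lemma bp_sub_bm : bp - bm = b.
Proof.
apply/rowP=> j; rewrite opprK !mxE.
by case: ltP; rewrite ?add0r ?addr0.
Qed.

Lemma cone0_bp : cone0 bp.
Proof.
by split=> [|i _]; rewrite mxE ?bcol_k ?maxxx // le_max lexx orbT.
Qed.

Lemma cone0_bm : cone0 bm.
Proof.
split=> [|i _]; rewrite [bm 0 _]mxE [negp _ 0 _]mxE ?bcol_k ?minxx ?oppr0 //.
by rewrite oppr_ge0 ge_min lexx orbT.
Qed.

Lemma bp_neq_bm : exists i0, bp 0 i0 != bm 0 i0.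
Proof.
have [/existsP[i0 ?]|/existsPn same] := boolP [exists i, bp 0 i != bm 0 i].
  by exists i0.
have b0 : b = 0.
  by apply/rowP=> j; rewrite -bp_sub_bm [LHS]mxE [(- bm) 0 j]mxE (eqP (negPn (same j))) subrr mxE.
have := bform_b e; rewrite b0 /bform !mul0mx mxE evecE eqxx mulr1 => d0.
by move: d_gt0; rewrite -d0 ltxx.
Qed.

Lemma bform_bp_bm (f : V) : f 0 k = 0 -> lam bp f = lam bm f.
Proof.
move=> fk; apply/eqP; rewrite -subr_eq0 -bformNl -bformDl bp_sub_bm bform_b fk.
by rewrite mulr0.
Qed.

Lemma x'E : x' = M (- e + bp) + M (- e + bm).
Proof. by rewrite /mu_basis eqxx. Qed.

Lemma mu_basis_neq i : i != k -> mu_basis M B k i = M (evec i).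
Proof. by rewrite /mu_basis => /negPf->. Qed.

Hypothesis divF : division_ring F.

Lemma x'_unit : x' \is a GRing.unit.
Proof.
apply/divF/eqP; rewrite x'E -[M _]scale1r -[M (- e + bm)]scale1r -!msum1 -msum_cat.
move=> /= x'0; have /eqP : mcoef [:: (1, - e + bp); (1, - e + bm)] (- e + bp) = 0.
  by apply: (msum_eq0 _ x'0) => u /[!inE] /orP[] /eqP-> /=; split=> //; apply: inA1.
rewrite /mcoef !big_cons big_nil /= eqxx (inj_eq (addrI _)).
have [i0 bpm] := bp_neq_bm.
have /negPf-> : bm != bp by apply: contraNneq bpm => ->.
by rewrite addr0 oner_eq0.
Qed.

Lemma Tge_M gen (f : V) : (forall j, f 0 j != 0 -> gen j = M (evec j)) -> cone f ->
  Tge gen S (M f).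
Proof.
move=> genf cf; rewrite [in M f](row_sum_delta f).
elim: (index_enum _) => [|j r IH]; first by rewrite big_nil M0; apply: Tge1.
rewrite big_cons M_add; apply/TgeZ/tg_mul/IH; first exact: inA_qhz.
have [->|fj] := eqVneq (f 0 j) 0; first by rewrite scale0r M0; apply: Tge1.
rewrite M_scale -/(evec j) -genf //; apply: Tge_expz.
by have [|/cf->] := boolP (j \in S); rewrite ?orbT.
Qed.

Lemma cone_Nevec i : i \in S -> cone (- evec i).
Proof.
by move=> iS j jS; rewrite mxE evecE; have [eij|] := eqVneq i j; rewrite ?oppr0 // -eij iS in jS.
Qed.

Lemma Tge_evecE z : Tge (fun i => M (evec i)) S z <-> inT z.
Proof.
split=> [|[U PU ->]].
  elim=> [i|j jS|a aA|u v _ Tu _ Tv|u v _ Tu _ Tv].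
  - exact/Aspan_M/cone_evec.
  - by rewrite M_V; apply/Aspan_M/cone_Nevec.
  - by rewrite -M0; apply/AspanZ/Aspan_M => // i _; rewrite mxE.
  - exact: AspanD.
  - exact: AspanM coneD Tu Tv.
apply: Tge_sum => u /PU[uA cu]; apply/TgeZ/Tge_M => // j _.
Qed.

Definition qcomm (w : F) :=
  forall f : V, f 0 k = 0 -> exists t : int, w * M f = qh ^ t *: (M f * w).

Lemma qcomm_M g : qcomm (M g).
Proof. by move=> f _; exists (2 * lam g f); rewrite M_comm. Qed.

Lemma qcommM w1 w2 : qcomm w1 -> qcomm w2 -> qcomm (w1 * w2).
Proof.
move=> c1 c2 f fk; have [t1 e1] := c1 f fk; have [t2 e2] := c2 f fk.
exists (t2 + t1); rewrite -mulrA e2 -scalerAr [w1 * (M f * _)]mulrA e1 -scalerAl.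
by rewrite scalerA -qhzD -mulrA.
Qed.

Lemma qcomm_exp w n : qcomm w -> qcomm (w ^+ n).
Proof.
move=> cw; elim: n => [|n IH]; last by rewrite exprS; apply: qcommM.
by move=> f _; exists 0; rewrite expr0 expr0z scale1r mul1r mulr1.
Qed.

Lemma qcommV w : w \is a GRing.unit -> qcomm w -> qcomm w^-1.
Proof.
move=> wU cw f fk; have [t wf] := cw f fk; exists (- t).
apply: (mulrI wU); rewrite -scalerAr !mulrA mulrV // mul1r wf -scalerAl.
by rewrite -mulrA mulrV // mulr1 scalerA -qhzD addNr expr0z scale1r.
Qed.

Lemma qcomm_expz w (n : int) : w \is a GRing.unit -> qcomm w -> qcomm (w ^ n).
Proof.
move=> wU cw; case: n => n; first exact: qcomm_exp.
by apply/qcommV/qcomm_exp; rewrite ?unitrX.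
Qed.

Lemma qcomm_x' : qcomm x'.
Proof.
move=> f fk; exists (2 * lam (- e + bp) f).
rewrite x'E mulrDl mulrDr (M_comm (- e + bp)) (M_comm (- e + bm)) scalerDr.
by rewrite [lam (- e + bm) f]bformDl [lam (- e + bp) f]bformDl bform_bp_bm.
Qed.

Lemma qcomm_twist w a : qcomm w -> inY a -> exists2 a', inY a' & w * a = a' * w.
Proof.
move=> cw [U PU ->]; elim: U PU => [|u U IH] PU.
  by exists 0; [apply: Aspan0|rewrite /msum big_nil mulr0 mul0r].
have [uA [uk cu]] := PU u (mem_head _ _).
have [|a' Ya' wU] := IH; first by move=> v vU; apply: PU; rewrite inE vU orbT.
have [t wu] := cw u.2 uk.
exists ((u.1 * qh ^ t) *: M u.2 + a').
  by apply/AspanD/Ya'/AspanZ/Aspan_M; [apply/inAM/inA_qhz|].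
rewrite /msum big_cons mulrDr -/(msum U) wU mulrDl -scalerAr wu scalerA.
by rewrite -scalerAl.
Qed.

Definition mu_span (z : F) :=
  exists2 W : seq (F * int), {in W, forall t, inY t.1} &
    z = \sum_(t <- W) t.1 * x' ^ t.2.

Lemma mu_span_term a (n : int) : inY a -> mu_span (a * x' ^ n).
Proof. by exists [:: (a, n)]; [move=> t /[!inE]/eqP->|rewrite big_seq1]. Qed.

Lemma mu_span_Y a : inY a -> mu_span a.
Proof. by move=> Ya; rewrite -[a]mulr1 -(expr0z x'); apply: mu_span_term. Qed.

Lemma mu_spanD u v : mu_span u -> mu_span v -> mu_span (u + v).
Proof.
move=> [U YU ->] [W YW ->]; exists (U ++ W); last by rewrite big_cat.
by move=> t; rewrite mem_cat => /orP[/YU|/YW].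
Qed.

Lemma mu_span_sum (I : eqType) (r : seq I) (G : I -> F) :
  {in r, forall i, mu_span (G i)} -> mu_span (\sum_(i <- r) G i).
Proof.
move=> muG; rewrite big_seq; elim/big_rec: _ => [|i z /muG]; last exact: mu_spanD.
by exists [::]; rewrite ?big_nil.
Qed.

Lemma mu_spanM u v : mu_span u -> mu_span v -> mu_span (u * v).
Proof.
move=> [U YU ->] [W YW ->]; rewrite mulr_suml; apply: mu_span_sum => s /YU Ys.
rewrite mulr_sumr; apply: mu_span_sum => t /YW Yt.
have [a' Ya' x't] := qcomm_twist (qcomm_expz s.2 x'_unit qcomm_x') Yt.
rewrite mulrA -(mulrA s.1) x't mulrA -mulrA -exprzDr ?x'_unit //.
exact/mu_span_term/(AspanM cone0D Ys Ya').
Qed.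

Lemma Tge_inY gen a : (forall j, j != k -> gen j = M (evec j)) -> inY a -> Tge gen S a.
Proof.
move=> genj [U PU ->]; apply: Tge_sum => u /PU[uA [uk cu]].
apply: TgeZ => //; apply: Tge_M => // j uj.
by apply: genj; apply: contraNneq uj => ->; rewrite uk.
Qed.

Lemma Tge_muE z : Tge (mu_basis M B k) S z <-> mu_span z.
Proof.
split=> [|[W YW ->]].
  elim=> [i|j jS|a aA|u v _ Tu _ Tv|u v _ Tu _ Tv].
  - have [->|ik] := eqVneq i k.
      by rewrite -[x']mul1r -[x'](expr1z); apply/mu_span_term/inY1.
    rewrite mu_basis_neq //; apply/mu_span_Y/Aspan_M.
    by split; [rewrite evecE (negPf ik)|apply: cone_evec].
  - have [->|jk] := eqVneq j k.
      by rewrite -[x'^-1]mul1r -[x' in x'^-1]expr1z invr_expz; apply/mu_span_term/inY1.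
    rewrite mu_basis_neq // M_V; apply/mu_span_Y/Aspan_M.
    by split; [rewrite mxE evecE (negPf jk) oppr0|apply: cone_Nevec].
  - exact/mu_span_Y/AspanZ/inY1.
  - exact: mu_spanD.
  - exact: mu_spanM.
apply: Tge_sum => t /YW Yt; apply: tg_mul; first by apply: Tge_inY => // j; apply: mu_basis_neq.
by apply: Tge_expz; rewrite kS orbT.
Qed.

(** * Grading by the exponent of X_k *)

Definition graded (z : F) (H : int -> F) :=
  (forall dg, homog dg (H dg)) /\
  exists ds : seq int,
    [/\ uniq ds, forall dg, dg \notin ds -> H dg = 0 & z = \sum_(dg <- ds) H dg].

Lemma homogM d1 d2 u v : homog d1 u -> homog d2 v -> homog (d1 + d2) (u * v).
Proof.
by apply: AspanM => f g [cf <-] [cg <-]; split; [apply: coneD|rewrite mxE].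
Qed.

Lemma inY_homog0 c : inY c -> homog 0 c.
Proof. by apply: AspanW => f []. Qed.

Lemma inY_inT a : inY a -> inT a.
Proof. by apply: AspanW => f []. Qed.

Lemma homog_inT dg z : homog dg z -> inT z.
Proof. by apply: AspanW => f []. Qed.

Lemma graded_unique z H1 H2 : graded z H1 -> graded z H2 -> H1 =1 H2.
Proof.
have split_at H dg : graded z H -> exists2 R, Aspan (fun f => f 0 k != dg) R & z = H dg + R.
  move=> [homH [ds [uds Hout ->]]]; exists (\sum_(i <- ds | i != dg) H i).
    by apply: Aspan_sum => i _ idg; apply: AspanW (homH i) => f [_ ->].
  exact: sumD1_seq uds (Hout dg).
move=> gH1 gH2 dg.
have [R1 R1dg z1] := split_at H1 dg gH1; have [R2 R2dg z2] := split_at H2 dg gH2.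
apply: (Aspan_unique (P := fun f => f 0 k == dg)) R1dg _ R2dg _; last by rewrite -z1 -z2.
  by apply: AspanW (gH1.1 dg) => f [_ ->].
by apply: AspanW (gH2.1 dg) => f [_ ->].
Qed.

Lemma gradedMl Q z H : homog 0 Q -> graded z H -> graded (Q * z) (fun dg => Q * H dg).
Proof.
move=> Q0 [homH [ds [uds Hout ->]]]; split=> [dg|].
  by have := homogM Q0 (homH dg); rewrite add0r.
by exists ds; split=> // [dg /Hout->|]; rewrite ?mulr0 // mulr_sumr.
Qed.

Lemma gradedZ a z H : inA a -> graded z H -> graded (a *: z) (fun dg => a *: H dg).
Proof.
move=> aA [homH [ds [uds Hout ->]]]; split=> [dg|]; first exact: AspanZ.
by exists ds; split=> // [dg /Hout->|]; rewrite ?scaler0 // scaler_sumr.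
Qed.

Lemma inT_graded z : inT z -> exists H, graded z H.
Proof.
move=> [U PU ->]; pose deg (u : Kq * V) := u.2 0 k.
exists (fun dg => msum [seq u <- U | deg u == dg]); split=> [dg|].
  eexists; last reflexivity.
  by move=> u /[!mem_filter] /andP[/eqP uk /PU[]].
exists (undup (map deg U)); split=> [||]; first exact: undup_uniq.
  move=> dg dgU; rewrite /msum big_filter big_seq_cond big1 // => u /andP[uU /eqP uk].
  by move: dgU; rewrite mem_undup -uk map_f.
rewrite /msum (big_fibers (key := deg) _ (undup_uniq (map deg U))) => [|dg]. 
  by apply: eq_bigr => dg _; rewrite big_filter.
by rewrite mem_undup.
Qed.

Lemma homog_x_expz (dg : int) : homog dg (x ^ dg).
Proof.
rewrite -M_scale -[_ *: e]addr0; apply: Aspan_M.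
by split; [apply/cone_shift => i; rewrite mxE|rewrite shift_k mxE addr0].
Qed.

Lemma homog_factor dg z : homog dg z -> exists2 c, inY c & z = c * x ^ dg.
Proof.
move=> [U PU ->]; pose sh (f : V) := (- dg) *: e + f.
exists (msum [seq (u.1 * qh ^ (- lam (sh u.2) (dg *: e)), sh u.2) | u <- U]).
  eexists; last reflexivity.
  move=> _ /mapP[u /PU[uA [cu uk]] ->] /=; split; first exact/inAM/inA_qhz.
  by split; [rewrite shift_k uk addNr|apply: cone_shift].
rewrite -M_scale /msum big_map mulr_suml; apply: eq_bigr => u _ /=.
by rewrite -scalerAl -scalerA -M_add /sh addrAC scaleNr addNr add0r.
Qed.

Lemma homog_x' : homog (-1) x'.
Proof.
have homNe f : cone0 f -> homog (-1) (M (- e + f)).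
  move=> [fk cf]; rewrite -scaleN1r; apply: Aspan_M.
  by split; [apply: cone_shift|rewrite shift_k fk addr0].
by rewrite x'E; apply/AspanD/homNe/cone0_bm/homNe/cone0_bp.
Qed.

Lemma homog_x'_exp (n : nat) : homog (- n%:Z) (x' ^+ n).
Proof.
elim: n => [|n IH]; first by rewrite expr0 -M0; apply: Aspan_M; split=> [i|]; rewrite mxE.
by rewrite exprSr; have := homogM IH homog_x'; rewrite -opprD -PoszD addn1.
Qed.

Local Notation Q m := (x ^+ m * x' ^+ m).

Lemma homog_Q m : homog 0 (Q m).
Proof. by rewrite -(subrr (m%:Z)); apply: homogM (homog_x_expz m) (homog_x'_exp m). Qed.

Lemma Q_unit m : Q m \is a GRing.unit.
Proof. by rewrite unitrMl ?unitrX ?M_unit ?x'_unit. Qed.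

(* [Q m] has degree 0 and absorbs the powers x'^n with n >= -m. *)
Lemma homog_Q_term m a (n : int) : inY a -> - (m%:Z) <= n ->
  homog (- n) (Q m * (a * x' ^ n)).
Proof.
move=> Ya mn.
have [a' Ya' Qa] := qcomm_twist (qcommM (qcomm_exp m (qcomm_M e)) (qcomm_exp m qcomm_x')) Ya.
have mn0 : 0 <= m%:Z + n by rewrite -lerBlDl sub0r.
rewrite mulrA Qa -!mulrA.
have -> : x' ^+ m * x' ^ n = x' ^+ absz (m%:Z + n).
  by rewrite -[x' ^+ m]/(x' ^ m%:Z) -exprzDr ?x'_unit // -[m%:Z + n]gez0_abs.
rewrite (_ : - n = 0 + (m%:Z - (m%:Z + n))).
  apply: homogM (inY_homog0 Ya') (homogM (homog_x_expz m) _).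
  by rewrite -{1}(gez0_abs mn0); apply: homog_x'_exp.
by rewrite add0r opprD addrA subrr add0r.
Qed.

Lemma mu_span_decomp y : mu_span y ->
  exists2 A : int -> F, (forall n, inY (A n)) & exists ns : seq int,
    [/\ uniq ns, forall n, n \notin ns -> A n = 0 & y = \sum_(n <- ns) A n * x' ^ n].
Proof.
move=> [W YW ->]; exists (fun n => \sum_(t <- W | t.2 == n) t.1).
  by move=> n; apply: Aspan_sum => t /YW.
exists (undup (map snd W)); split=> [||]; first exact: undup_uniq.
  move=> n nW; rewrite big_seq_cond big1 // => t /andP[tW /eqP tn].
  by move: nW; rewrite mem_undup -tn map_f.
rewrite (big_fibers (key := snd) _ (undup_uniq (map snd W))) => [|n]; last by rewrite mem_undup.
by apply: eq_bigr => n _; rewrite mulr_suml; apply: eq_bigr => t /eqP<-.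
Qed.

Lemma graded_Q_mu A ns m : (forall n, inY (A n)) -> uniq ns ->
  (forall n, n \notin ns -> A n = 0) -> {in ns, forall n, - (m%:Z) <= n} ->
  graded (Q m * \sum_(n <- ns) A n * x' ^ n) (fun dg => Q m * (A (- dg) * x' ^ (- dg))).
Proof.
move=> YA uns Aout mns; split=> [dg|].
  have [nns|nns] := boolP (- dg \in ns); last by rewrite Aout // mul0r mulr0; apply: Aspan0.
  by rewrite -{1}(opprK dg); apply/homog_Q_term/mns.
exists (map -%R ns); split.
- by rewrite map_inj_uniq //; apply: oppr_inj.
- move=> dg dgns; rewrite Aout ?mul0r ?mulr0 //.
  by apply: contra dgns => /(map_f -%R); rewrite opprK.
- by rewrite mulr_sumr big_map; apply: eq_bigr => n _; rewrite opprK.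
Qed.

(** * Divisibility through binomials *)

Definition binom (E : F) := exists a1 a2 : int, E = qh ^ a1 *: M bp + qh ^ a2 *: M bm.

Inductive binom_prod : F -> Prop :=
| binom_prod1 : binom_prod 1
| binom_prodM Z E of binom_prod Z & binom E : binom_prod (Z * E).

(* The coefficient of f + bp in the product involves c_f, with a unit factor, and
   c_(f + bp - bm) only; so divisibility of the coefficients of c propagates
   backwards along bp - bm, which increases f_i0 * (bp_i0 - bm_i0). *)
Lemma mcoef_dvd_mul_binom p (a1 a2 : int) Uc Ua : inA p ->
  supported (fun=> True) Uc -> supported (fun=> True) Ua ->
  msum Uc * (qh ^ a1 *: M bp + qh ^ a2 *: M bm) = p *: msum Ua ->
  forall f, dvdA p (mcoef Uc f).
Proof.
move=> pA UcA UaA; set E2 := [:: (qh ^ a1, bp); (qh ^ a2, bm)].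
rewrite (_ : _ + _ = msum E2) ?msum_mul ?msum_scale; last by rewrite -!msum1 -msum_cat.
move=> /msum_inj coef_eq.
have {coef_eq} coef_eq g : mcoef (mmul Uc E2) g = p * mcoef Ua g.
  rewrite -mcoef_scale coef_eq //; last exact: supported_scale.
  apply: (@supported_mmul _ (fun=> True)) UcA _ => // u.
  by rewrite !inE => /orP[] /eqP-> /=; split=> //; apply: inA_qhz.
have [i0 bpm] := bp_neq_bm; pose dl := bp 0 i0 - bm 0 i0.
apply: (@step_induction _ _ (map snd Uc) (fun f => f 0 i0 * dl) (fun f => f + bp - bm)).
- by move=> f /mcoef_out->; apply: dvdA0.
- move=> f; have -> : (f + bp - bm) 0 i0 * dl = f 0 i0 * dl + dl * dl.
    by rewrite /dl !mxE; ring.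
  by rewrite ltrDl lt0r sqr_ge0 mulf_eq0 orbb subr_eq0 bpm.
move=> f [c [cA ec]]; have := coef_eq (f + bp); rewrite mcoef_mul_pair -!qhzD => eq.
exists ((mcoef Ua (f + bp) - c * qh ^ (a2 + lam (f + bp - bm) bm)) * qh ^ (- (a1 + lam f bp))).
split; first by apply/inAM/inA_qhz/inAB/inAM/inA_qhz => //; apply: inA_sum => u /UaA[].
by rewrite mulrA mulrBr -eq ec mulrA addrK -mulrA qhzNK mulr1.
Qed.

Lemma dvd_mcoef_inY p U : supported cone0 U -> (forall f, dvdA p (mcoef U f)) ->
  exists2 v, inY v & msum U = p *: v.
Proof.
move=> PU dvd; rewrite msum_regroup.
have : forall g, g \in undup (map snd U) -> cone0 g.
  by move=> g; rewrite mem_undup => /mapP[u /PU[_ ?] ->].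
elim: (undup _) => [|g s IH] cs; first by exists 0; [apply: Aspan0|rewrite big_nil scaler0].
rewrite big_cons; have [|v Yv ->] := IH; first by move=> h hs; apply: cs; rewrite inE hs orbT.
have [c [cA ->]] := dvd g; exists (c *: M g + v); last by rewrite scalerDr scalerA.
by apply/AspanD/Yv/AspanZ/Aspan_M/cs/mem_head.
Qed.

Lemma inY_div_binom p c a E : inA p -> inY c -> inY a -> binom E ->
  c * E = p *: a -> exists2 v, inY v & c = p *: v.
Proof.
move=> pA [Uc Pc ->] [Ua Pa ->] [a1 [a2 ->]] /mcoef_dvd_mul_binom dvd.
apply: (dvd_mcoef_inY Pc); apply: dvd => //; [exact: supportedW Pc|exact: supportedW Pa].
Qed.

Lemma inY_binom E : binom E -> inY E.
Proof.
move=> [a1 [a2 ->]].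
by apply/AspanD/AspanZ/Aspan_M/cone0_bm/inA_qhz/AspanZ/Aspan_M/cone0_bp/inA_qhz.
Qed.

Lemma inY_binom_prod Z : binom_prod Z -> inY Z.
Proof.
by elim=> [|Z1 E _ YZ /inY_binom YE]; [apply: inY1|apply: AspanM cone0D YZ YE].
Qed.

Lemma binom_prod_div p Z : inA p -> binom_prod Z ->
  forall c a, inY c -> inY a -> c * Z = p *: a -> exists2 v, inY v & c = p *: v.
Proof.
move=> pA; elim=> [|Z1 E bZ IH bE] c a Yc Ya; first by rewrite mulr1 => ->; exists a.
rewrite mulrA => /(inY_div_binom pA _ Ya bE) [|v Yv]; last exact: IH.
exact: AspanM cone0D Yc (inY_binom_prod bZ).
Qed.

Lemma binom_conj w E : w \is a GRing.unit -> qcomm w -> binom E -> binom (w^-1 * E * w).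
Proof.
move=> wU cw [a1 [a2 ->]].
have conjM (f : V) : f 0 k = 0 -> exists t, w^-1 * M f * w = qh ^ t *: M f.
  by move=> fk; have [t ->] := qcommV wU cw fk; exists t; rewrite -scalerAl mulrVK.
have [t1 e1] := conjM _ cone0_bp.1; have [t2 e2] := conjM _ cone0_bm.1.
exists (a1 + t1), (a2 + t2).
by rewrite mulrDr mulrDl -!scalerAr -!scalerAl e1 e2 !scalerA !qhzD.
Qed.

Lemma binom_prod_exp u w j : w \is a GRing.unit -> qcomm w -> binom (u * w) ->
  binom_prod (u ^+ j * w ^+ j).
Proof.
move=> wU cw buw; elim: j => [|j IH]; first by rewrite !expr0 mulr1; apply: binom_prod1.
have -> : u ^+ j.+1 * w ^+ j.+1 = u ^+ j * w ^+ j * ((w ^+ j)^-1 * (u * w) * w ^+ j).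
  by rewrite exprSr exprS !mulrA (mulrK (unitrX j wU)).
exact: binom_prodM IH (binom_conj (unitrX j wU) (qcomm_exp j cw) buw).
Qed.

Lemma binom_xx' : binom (x * x').
Proof.
exists (lam e (- e + bp)), (lam e (- e + bm)).
by rewrite x'E mulrDr !M_mul !addNKr.
Qed.

Lemma binom_x'x : binom (x' * x).
Proof.
exists (lam (- e + bp) e), (lam (- e + bm) e).
by rewrite x'E mulrDl !M_mul (addrC (- e) bp) (addrC (- e) bm) !subrK.
Qed.

Lemma binom_prod_cancel p a c u w : inA p -> p != 0 -> w \is a GRing.unit ->
  binom_prod (u * w) -> inY a -> inY c -> p *: (a * w^-1) = c * u ->
  exists2 v, inY v & a * w^-1 = v * u.
Proof.
move=> pA p0 wU buw Ya Yc pa_cu.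
have [|v Yv cv] := binom_prod_div pA buw Yc Ya.
  by rewrite mulrA -pa_cu -scalerAl mulrVK.
by exists v => //; apply: (scalerI p0); rewrite pa_cu cv scalerAl.
Qed.

Lemma mu_span_x_exp j : mu_span (x ^+ j).
Proof.
have mu_x : mu_span x.
  rewrite -[x](mulrK x'_unit) -[x'^-1]/(x' ^ (-1)); apply: mu_span_term.
  exact/inY_binom/binom_xx'.
elim: j => [|j IH]; last by rewrite exprS; apply: mu_spanM.
by rewrite expr0; apply/mu_span_Y/inY1.
Qed.

Variable p : Kq.
Hypotheses (pA : inA p) (p0 : p != 0).

Lemma inT_of_scaled y : mu_span y -> inT (p *: y) -> inT y.
Proof.
move=> /mu_span_decomp[A YA [ns [uns Aout ->]]] /inT_graded[G gG].
have [m mns] := seq_int_lbound ns.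
have AG n : p *: (A n * x' ^ n) = G (- n).
  have := gradedZ pA (graded_Q_mu YA uns Aout mns); rewrite scalerAr => gA.
  have := graded_unique gA (gradedMl (homog_Q m) gG) (- n).
  by rewrite opprK scalerAr => /(mulrI (Q_unit m)).
apply: Aspan_sum => -[] j _ _.
  exact: AspanM coneD (inY_inT (YA _)) (homog_inT (homog_x'_exp j)).
have [c Yc Gc] := homog_factor (gG.1 (- Negz j)).
have [||v Yv ->] :=
  binom_prod_cancel (u := x ^+ j.+1) pA p0 (unitrX j.+1 x'_unit) _ (YA (Negz j)) Yc.
- exact/binom_prod_exp/binom_xx'/qcomm_x'/x'_unit.
- by rewrite AG Gc.
exact: AspanM coneD (inY_inT Yv) (homog_inT (homog_x_expz j.+1)).
Qed.

Lemma mu_span_of_scaled y : inT y -> mu_span (p *: y) -> mu_span y.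
Proof.
move=> /inT_graded[G gG] /mu_span_decomp[A YA [ns [uns Aout pyE]]].
have [m mns] := seq_int_lbound ns.
have GA dg : p *: G dg = A (- dg) * x' ^ (- dg).
  have := graded_Q_mu YA uns Aout mns; rewrite -pyE => gA.
  have := graded_unique (gradedMl (homog_Q m) (gradedZ pA gG)) gA dg.
  exact: (mulrI (Q_unit m)).
have [_ [ds [_ _ ->]]] := gG; apply: mu_span_sum => dg _.
have [c Yc Gc] := homog_factor (gG.1 dg); rewrite Gc.
case: dg Gc => j Gc; first exact/mu_spanM/mu_span_x_exp/mu_span_Y.
have [||v Yv ->] :=
  binom_prod_cancel (u := x' ^+ j.+1) pA p0 (unitrX j.+1 (M_unit e)) _ Yc (YA (- Negz j)).
- exact/binom_prod_exp/binom_x'x/qcomm_M/M_unit.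
- by rewrite -Gc GA.
exact: (mu_span_term j.+1 Yv).
Qed.

End Mutation.
End ToricFrame.

Theorem proposition5p10 (F : unitAlgType Kq) (N : nat)
  (ex inv : {set 'I_N}) (M : 'rV[int]_N -> F) (L B : 'M[int]_N)
  (p : Kq) (k : 'I_N) :
  division_ring F ->
  toric_frame M L -> compatible ex L B ->
  [disjoint inv & ex] ->
  primeA p -> k \in ex ->
  forall z : F,
    (Tge (fun i => M (evec i)) (ex :|: inv) z /\
     exists y, Tge (mu_basis M B k) (ex :|: inv) y /\ z = p *: y)
    <->
    ((exists y, Tge (fun i => M (evec i)) (ex :|: inv) y /\ z = p *: y) /\
     Tge (mu_basis M B k) (ex :|: inv) z).
Proof.
move=> divF tfM compat _ [pA p0 _ _] kex z.
have kS : k \in ex :|: inv by rewrite in_setU kex.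
have [d d_gt0 bform_b] := compatible_bform compat kex.
have TE := Tge_evecE tfM (ex :|: inv).
have TmE := Tge_muE tfM kS d_gt0 bform_b divF.
split=> [[Tz [y [Ty zE]]] | [[y [Ty zE]] Tz]]; subst z; split; try exact: TgeZ.
- exists y; split=> //; apply/TE.
  by apply: (inT_of_scaled tfM kS d_gt0 bform_b divF pA p0); [apply/TmE|apply/TE].
- exists y; split=> //; apply/TmE.
  by apply: (mu_span_of_scaled tfM kS d_gt0 bform_b divF pA p0); [apply/TE|apply/TmE].
Qed.
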